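(* Let $m,n$ be integers with $m\ge 3$ and $n\ge 2$. Then the set $E(m,n)=\{k \mid \text{there exists a primitive nonnegative tensor } \mathbb{A} \text{ of order } m \text{ and dimension } n \text{ with } \gamma(\mathbb{A})=k\}$ equals $\{1,2,\ldots,(n-1)^2+1\}$.
   Context: A tensor $\mathbb{A}=(a_{i_1i_2\ldots i_m})$ of order $m$ and dimension $n$ is an array with entries indexed by $i_1,\ldots,i_m\in[n]=\{1,\ldots,n\}$; it is nonnegative if all entries are real and $\ge 0$. For $x\in\mathbb{R}^n$, $\mathbb{A}x\in\mathbb{R}^n$ is the vector with $(\mathbb{A}x)_i=\sum_{i_2,\ldots,i_m=1}^n a_{ii_2\ldots i_m}x_{i_2}\cdots x_{i_m}$, and $x^{[r]}=(x_1^r,\ldots,x_n^r)^T$. Define $T_{\mathbb{A}}(x)=(\mathbb{A}x)^{[1/(m-1)]}$. A nonnegative tensor $\mathbb{A}$ is primitive if there is a positive integer $r$ such that $T_{\mathbb{A}}^r(x)>0$ (entrywise) for every nonnegative nonzero $x\in\mathbb{R}^n$; the smallest such $r$ is the primitive degree $\gamma(\mathbb{A})$. *)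

From mathcomp Require Import all_boot all_order all_algebra.
From mathcomp Require Import reals exp.
Set Implicit Arguments. Unset Strict Implicit. Unset Printing Implicit Defensive.
Import Order.TTheory GRing.Theory Num.Theory.
Local Open Scope ring_scope.

(* A tensor of order m and dimension n: entries indexed by (i_1,...,i_m),
   encoded as a function f : 'I_m -> 'I_n (f k = i_{k+1}). *)
Definition tensor (R : realType) (m n : nat) := {ffun {ffun 'I_m -> 'I_n} -> R}.

Definition nonneg_tensor (R : realType) m n (A : tensor R m n) : Prop :=
  forall f, 0 <= A f.

Definition tapp (R : realType) m n (A : tensor R m n) (x : 'I_n -> R) : 'I_n -> R :=
  fun i => \sum_(f : {ffun 'I_m -> 'I_n} |
                 [forall k : 'I_m, (val k == 0%N) ==> (f k == i)])
             A f * \prod_(k : 'I_m | val k != 0%N) x (f k).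

Definition TA (R : realType) m n (A : tensor R m n) (x : 'I_n -> R) : 'I_n -> R :=
  fun i => powR (tapp A x i) ((m.-1)%:R)^-1.

Definition nonneg_nonzero_vec (R : realType) n (x : 'I_n -> R) : Prop :=
  (forall i, 0 <= x i) /\ (exists i, x i != 0).

Definition prim_exponent (R : realType) m n (A : tensor R m n) (r : nat) : Prop :=
  (0 < r)%N /\
  forall x : 'I_n -> R, nonneg_nonzero_vec x -> forall i, 0 < iter r (TA A) x i.

Definition primitive (R : realType) m n (A : tensor R m n) : Prop :=
  nonneg_tensor A /\ exists r, prim_exponent A r.

Definition primitive_degree (R : realType) m n (A : tensor R m n) (k : nat) : Prop :=
  prim_exponent A k /\ forall r, (r < k)%N -> ~ prim_exponent A r.

From mathcomp Require Import all_boot all_order all_algebra.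
From mathcomp Require Import reals exp.
From mathcomp Require Import zify.
Set Implicit Arguments. Unset Strict Implicit. Unset Printing Implicit Defensive.
Import Order.TTheory GRing.Theory Num.Theory.

(* For a nonnegative tensor A, T_A maps a vector with support S to one with support
   F S := {i | a_{i i_2 .. i_m} > 0 for some i_2, .., i_m in S}, so gamma(A) is the least r
   such that F^r sends every nonempty set to the whole index set.

   F is monotone and, A being primitive, some selector g with g u in F {u}
   is not injective (otherwise F maps singletons to singletons).  From any j the
   g-trajectory enters, after a steps, a cycle of length s < n with a + s <= n.  For v on
   that cycle, v lies in F^s {v}, so the sets F^(qs) {v} grow strictly until they are
   everything; hence F^(s(n-1)+a) {j} is full and s(n-1) + a <= (n-1)^2 + 1.

   A hypergraph on Z/nZ with edges i <- (u, w) is realised by the 0/1 tensor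
   with a_{i u w .. w} = 1 (here m >= 3 is used).  Exponent k is attained by a path for
   k <= n, by the Wielandt digraph for k = (n-1)^2 + 1, and in between by Wielandt plus
   one extra hyperedge: either one that fills everything at once (k <= 2n - 2), or one that
   keeps a vertex q in the orbit of {0} once that window reaches q, so that from then on
   the window grows at every step. *)

Lemma set1_neq0 (T : finType) (x : T) : [set x] != set0.
Proof. by apply/set0Pn; exists x; rewrite inE. Qed.

Lemma injective_update_noninj (T : finType) (g : T -> T) (u w : T) :
  injective g -> w != g u -> ~~ injectiveb (fun x => if x == u then w else g x).
Proof.
move=> inj_g w_neq; have [g' gK g'K] := injF_bij inj_g.
have u'_neq : g' w != u by apply: contraNneq w_neq => <-; rewrite g'K.
apply/injectivePn; exists u, (g' w); first by rewrite eq_sym.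
by rewrite eqxx (negbTE u'_neq) g'K.
Qed.

(* If the orbit of x were all of T and closed up into a cycle, g would be a permutation. *)
Lemma noninjective_rho (T : finType) (g : T -> T) (x : T) :
  ~~ injectiveb g ->
  exists a s, [/\ 0 < s < #|T|, a + s <= #|T| & iter (a + s) g x = iter a g x].
Proof.
move=> ninj_g.
have /trajectP[a lt_a_o iter_o] := looping_order g x.
have le_o_T : order g x <= #|T| := max_card _.
exists a, (order g x - a); rewrite subnKC ?(ltnW lt_a_o) //; split=> //.
rewrite subn_gt0 lt_a_o /= ltnNge; apply: contra ninj_g => le_T_s.
(* [set] merges two elaborations of #|T| that lia would see as distinct atoms. *)
set N := #|T| in le_o_T le_T_s *.
have [o_T a0] : order g x = N /\ a = 0 by lia.
have orbit_all y : y \in orbit g x.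
  have /subset_cardP/(_ (subset_predT _)) conn_all : #|fconnect g x| = #|predT : {pred T}|.
    exact: o_T.
  by rewrite -fconnect_orbit -[fconnect _ _ _]/(y \in fconnect g x) conn_all.
have /(orbitPcycle 4 5) inj_orbit : iter (order g x) g x = x by rewrite iter_o a0.
by apply/injectiveP => y z; apply: inj_orbit.
Qed.

Section MonotoneSetMaps.

Variable T : finType.
Implicit Types (F G : {set T} -> {set T}) (S X : {set T}).

Definition set_exponent F r := 0 < r /\ forall S, S != set0 -> iter r F S = setT.

Lemma iter_subset F t S X :
  {homo F : A B / A \subset B} -> S \subset X -> iter t F S \subset iter t F X.
Proof. by move=> Fmono; elim: t => //= t IH /IH; apply: Fmono. Qed.

Lemma setT_fixed_of_iter F t S :
  {homo F : A B / A \subset B} -> 0 < t -> iter t F S = setT -> F setT = setT.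
Proof.
move=> Fmono; case: t => // t _ /= iterS_eq; apply/eqP.
by rewrite eqEsubset subsetT -{1}iterS_eq Fmono ?subsetT.
Qed.

Lemma iter_setT_le F r t S :
  F setT = setT -> iter r F S = setT -> r <= t -> iter t F S = setT.
Proof. by move=> FT iter_r /subnK <-; rewrite iterD iter_r iter_fix. Qed.

Lemma set_exponent_set1 F r :
  F set0 = set0 -> set_exponent F r -> forall u, F [set u] != set0.
Proof.
move=> F0 [r_gt0 Fr] u; apply/eqP => F1_0; move: (Fr _ (set1_neq0 u)).
case: r r_gt0 {Fr} => // r _; rewrite iterSr F1_0 iter_fix //.
by move/setP/(_ u); rewrite !inE.
Qed.

Lemma iter_set1_sub_iter F (g : T -> T) t x :
  {homo F : A B / A \subset B} -> (forall u, F [set u] \subset [set g u]) ->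
  iter t F [set x] \subset [set iter t g x].
Proof.
move=> Fmono Fg; elim: t => //= t IH.
exact: subset_trans (Fmono _ _ IH) (Fg _).
Qed.

Lemma iter_selector_mem F (g : T -> T) t x :
  {homo F : A B / A \subset B} -> (forall u, g u \in F [set u]) ->
  iter t g x \in iter t F [set x].
Proof.
move=> Fmono Fg; elim: t => [|t IH] /=; first by rewrite inE.
by apply: (subsetP (Fmono _ _ _)) (Fg _); rewrite sub1set.
Qed.

Lemma set_exponent_noninj_selector F r :
  1 < #|T| -> {homo F : A B / A \subset B} -> F set0 = set0 -> set_exponent F r ->
  exists2 g : T -> T, forall u, g u \in F [set u] & ~~ injectiveb g.
Proof.
move=> T_gt1 Fmono F0 Fexp.
pose g0 u := odflt u [pick v in F [set u]].
have g0P u : g0 u \in F [set u].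
  rewrite /g0; case: pickP => [//|/= none].
  by case/set0Pn: (set_exponent_set1 F0 Fexp u) => v; rewrite none.
have [inj_g0|] := boolP (injectiveb g0); last by exists g0.
have [[u w /andP[w_in w_neq]]|single] :=
  pickP [pred uw : T * T | (uw.2 \in F [set uw.1]) && (uw.2 != g0 uw.1)].
  exists (fun x => if x == u then w else g0 x).
    by move=> x; case: eqP => [->|].
  exact/injective_update_noninj/w_neq/injectiveP.
(* Otherwise every [F [set u]] is a singleton, and so are all iterates of a singleton. *)
have Fg0 u : F [set u] \subset [set g0 u].
  apply/subsetP => w w_in; rewrite inE; apply: contraFT (single (u, w)) => /= w_neq.
  by rewrite w_in.
case/card_gt0P: (ltnW T_gt1) => x _.
case: Fexp => _ /(_ _ (set1_neq0 x)) full.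
have := subset_leq_card (iter_set1_sub_iter r x Fmono Fg0).
by rewrite full cardsT cards1 leqNgt T_gt1.
Qed.

Lemma iter_card_setT G S :
  {homo G : A B / A \subset B} -> S != set0 -> S \subset G S ->
  (forall X, S \subset X -> G X = X -> X = setT) ->
  iter #|T|.-1 G S = setT.
Proof.
move=> Gmono S_neq0 S_sub fixT.
pose X q := iter q G S.
have X_incr q : X q \subset X q.+1 by elim: q => [|q IH]; [exact: S_sub | exact: Gmono].
have S_X q : S \subset X q by elim: q => // q IH; apply: subset_trans IH (X_incr q).
have X_grow q : X q = setT \/ q < #|X q|.
  elim: q => [|q [XT|lt_q]]; first by right; rewrite card_gt0.
  - by left; apply/eqP; rewrite eqEsubset subsetT -XT X_incr.
  - have [X_eq|X_neq] := eqVneq (X q.+1) (X q); first by left; rewrite X_eq; apply: fixT.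
    right; have : X q \proper X q.+1 by rewrite properEneq eq_sym X_neq X_incr.
    by move/proper_card; apply: leq_trans.
have [//|lt_card] := X_grow #|T|.-1.
by apply/eqP; rewrite eqEcard subsetT cardsT (leq_trans (leqSpred _) lt_card).
Qed.

Lemma cycle_point_setT F r s v :
  {homo F : A B / A \subset B} -> set_exponent F r -> 0 < s ->
  v \in iter s F [set v] -> iter (s * #|T|.-1) F [set v] = setT.
Proof.
move=> Fmono [r_gt0 Fr] s_gt0 v_in.
have FT : F setT = setT := setT_fixed_of_iter Fmono r_gt0 (Fr _ (set1_neq0 v)).
rewrite mulnC iterM; apply: iter_card_setT.
- by move=> A B; apply: iter_subset.
- exact: set1_neq0.
- by rewrite sub1set.
move=> X v_X X_fix; rewrite -(iter_fix r X_fix) -iterM.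
apply: iter_setT_le FT (Fr _ _) _; last by rewrite leq_pmulr.
by apply/set0Pn; exists v; rewrite -sub1set.
Qed.

Lemma set_exponent_wielandt_bound F r :
  1 < #|T| -> {homo F : A B / A \subset B} -> F set0 = set0 -> set_exponent F r ->
  set_exponent F ((#|T| - 1) ^ 2 + 1).
Proof.
move=> T_gt1 Fmono F0 Fexp.
have [g g_sel ninj_g] := set_exponent_noninj_selector T_gt1 Fmono F0 Fexp.
split; first by rewrite addn1.
move=> S /set0Pn[x x_S]; apply/eqP; rewrite eqEsubset subsetT /=.
have FT : F setT = setT.
  by case: Fexp => r_gt0 /(_ _ (set1_neq0 x)); apply: setT_fixed_of_iter.
have [a [s [/andP[s_gt0 s_lt] as_le cyc]]] := noninjective_rho x ninj_g.
pose v := iter a g x.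
have v_in : v \in iter s F [set v].
  by have := iter_selector_mem s v Fmono g_sel; rewrite /v -iterD addnC cyc.
have v_reached : [set v] \subset iter a F [set x] by rewrite sub1set iter_selector_mem.
have x_full : iter (s * #|T|.-1 + a) F [set x] = setT.
  apply/eqP; rewrite eqEsubset subsetT /= -(cycle_point_setT Fmono Fexp s_gt0 v_in) iterD.
  exact: iter_subset Fmono v_reached.
rewrite -(@iter_setT_le F _ ((#|T| - 1) ^ 2 + 1) _ FT x_full) ?iter_subset ?sub1set //.
set N := #|T| in T_gt1 s_lt as_le *; rewrite expnS expn1; nia.
Qed.

Definition singleton_exponent F k :=
  [/\ 0 < k, forall j, iter k F [set j] = setT & exists z, iter k.-1 F [set z] != setT].

(* Every singleton lies on the orbit of [set z], so it fills up no later than [set z]. *)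
Lemma singleton_exponent_orbit F k z :
  {homo F : A B / A \subset B} -> 0 < k ->
  iter k F [set z] = setT -> iter k.-1 F [set z] != setT ->
  (forall j, exists t, iter t F [set z] = [set j]) -> singleton_exponent F k.
Proof.
move=> Fmono k_gt0 z_full z_late orbit; split=> //; last by exists z.
move=> j; have [t <-] := orbit j.
by rewrite -iterD addnC iterD z_full iter_fix // (setT_fixed_of_iter Fmono k_gt0 z_full).
Qed.

End MonotoneSetMaps.

Definition hsucc (T : finType) (e : T -> T -> T -> bool) (S : {set T}) : {set T} :=
  [set i | [exists u, exists w, [&& e i u w, u \in S & w \in S]]].

Lemma hsucc_homo (T : finType) (e : T -> T -> T -> bool) :
  {homo hsucc e : A B / A \subset B}.
Proof.
move=> A B AB; apply/subsetP => i; rewrite !inE.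
case/existsP => u /existsP[w /and3P[e_iuw u_A w_A]].
by apply/existsP; exists u; apply/existsP; exists w; rewrite e_iuw !(subsetP AB).
Qed.

Ltac case_ifs := repeat (match goal with |- context [if ?b then _ else _] =>
  lazymatch b with context [if _ then _ else _] => fail | _ =>
  let H := fresh "Hif" in case: (boolP b) => H /= end end).

Section CyclicWindows.

Variable n : nat.

(* [cwin a L] is the arc {a, a + 1, ..., a + L - 1} of Z/nZ, for L <= n. *)
Definition in_cwin (a L x : nat) := (a <= x < a + L) || (x + n < a + L).
Definition cwin (a L : nat) : {set 'I_n} := [set x : 'I_n | in_cwin a L x].
Definition csucc (a : nat) := if a.+1 == n then 0 else a.+1.

Lemma cwin_setT a L : n <= L -> cwin a L = setT.
Proof. by move=> le_nL; apply/setP => x; rewrite !inE /in_cwin; have := ltn_ord x; lia. Qed.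

Lemma cwin_eq a L1 L2 : L1 = L2 \/ (n <= L1 /\ n <= L2) -> cwin a L1 = cwin a L2.
Proof. by case=> [->|[/(cwin_setT a) -> /(cwin_setT a) ->]]. Qed.

Lemma cwin1 (x : 'I_n) : cwin x 1 = [set x].
Proof.
apply/setP => y; rewrite !inE /in_cwin; have := ltn_ord y; have := ltn_ord x.
by move=> *; apply/idP/eqP => [?|->]; [apply: val_inj => /=; lia | lia].
Qed.

Lemma cwin_neqT a L : a < n -> L < n -> cwin a L != setT.
Proof.
move=> lt_a lt_L; apply/negP => /eqP /setP.
have lt_x : (if a + L < n then a + L else a + L - n) < n by case_ifs; lia.
by move=> /(_ (Ordinal lt_x)); rewrite !inE /in_cwin /=; case_ifs; lia.
Qed.

Lemma setU1_cwin (q : 'I_n) L : q |: cwin (csucc q) L = cwin q L.+1.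
Proof.
apply/setP => x; rewrite !inE /in_cwin /csucc; have := ltn_ord x; have := ltn_ord q.
have [->|x_neq] := eqVneq x q; first by case_ifs; lia.
have : nat_of_ord x != q by []; case_ifs; lia.
Qed.

End CyclicWindows.

Section Wielandt.

Variable n : nat.

(* The Wielandt digraph (the cycle 0 -> 1 -> ... -> n-1 -> 0 plus the chord n-1 -> 1),
   read as a hypergraph whose edges [i <- (u, u)] use a repeated tail. *)
Definition wielandt_rel (h u w : 'I_n) :=
  (u == w) && [|| h == u + 1 :> nat, (u + 1 == n) && (h == 0 :> nat)
                | (u + 1 == n) && (h == 1 :> nat)].

Lemma hsucc_wielandt_cwin a L : 2 <= n -> a < n -> 0 < L ->
  hsucc wielandt_rel (cwin n a L) = cwin n (csucc n a) (if a + L == n then L.+1 else L).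
Proof.
move=> n_ge2 lt_a L_gt0; apply/setP => x; rewrite !inE /in_cwin /csucc.
have lt_x := ltn_ord x; have lt_n1 : n.-1 < n by lia.
apply/idP/idP.
  case/existsP => u /existsP[w /and3P[/andP[/eqP <- e_xu] u_in _]].
  move: u_in; rewrite inE /in_cwin; have := ltn_ord u.
  by case: (a.+1 =P n); case: (a + L =P n); lia.
move=> x_in.
have [x0|x_gt0] := posnP x.
  apply/existsP; exists (Ordinal lt_n1); apply/existsP; exists (Ordinal lt_n1).
  rewrite /wielandt_rel eqxx /= inE /in_cwin /=.
  by move: x_in; case: (a.+1 =P n); case: (a + L =P n); lia.
have lt_xp : x.-1 < n by lia.
have [xp_in|xp_out] := boolP (in_cwin n a L x.-1).
  apply/existsP; exists (Ordinal lt_xp); apply/existsP; exists (Ordinal lt_xp).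
  by rewrite /wielandt_rel eqxx /= inE xp_in andbT; lia.
apply/existsP; exists (Ordinal lt_n1); apply/existsP; exists (Ordinal lt_n1).
rewrite /wielandt_rel eqxx /= inE /in_cwin /=.
by move: x_in xp_out; rewrite /in_cwin; case: (a.+1 =P n); case: (a + L =P n); lia.
Qed.

(* Length of the window [iter (j * n + a) F [set 0]]: it grows by one at each pass
   through the chord. *)
Definition wlen j a := if n <= j + a then j.+2 else j.+1.

Lemma wielandt_orbit F (z : 'I_n) T :
  2 <= n -> nat_of_ord z = 0 ->
  (forall j a, a < n -> j * n + a < T ->
     F (cwin n a (wlen j a)) = hsucc wielandt_rel (cwin n a (wlen j a))) ->
  forall j a, a < n -> j * n + a <= T -> iter (j * n + a) F [set z] = cwin n a (wlen j a).
Proof.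
move=> n_ge2 z0 FW.
suff orbit t j a : a < n -> t = j * n + a -> t <= T -> iter t F [set z] = cwin n a (wlen j a).
  by move=> j a lt_a le_T; apply: (orbit _ j a).
elim: t j a => [|t IH] j a lt_a t_eq le_T.
  have [-> ->] : a = 0 /\ j = 0 by case: j t_eq => // j; rewrite mulSn; lia.
  by rewrite /= -cwin1 z0 /wlen ifN //; lia.
case: a lt_a t_eq => [|a] lt_a t_eq.
- case: j t_eq => [|j] t_eq; first by rewrite mul0n in t_eq.
  have lt_n1 : n.-1 < n by lia.
  rewrite iterS (IH j n.-1) ?FW ?hsucc_wielandt_cwin /wlen; try (case_ifs; lia).
  rewrite /csucc prednK ?eqxx; last lia.
  by apply: cwin_eq; case_ifs; lia.
- rewrite iterS (IH j a) ?FW ?hsucc_wielandt_cwin /wlen; try (case_ifs; lia).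
  rewrite /csucc; have -> : (a.+1 == n) = false by apply/eqP; lia.
  by apply: cwin_eq; left; case_ifs; lia.
Qed.

Lemma wielandt_orbit_set1 F (z : 'I_n) T : n.-1 <= T ->
  (forall j a, a < n -> j * n + a <= T -> iter (j * n + a) F [set z] = cwin n a (wlen j a)) ->
  forall j : 'I_n, exists t, iter t F [set z] = [set j].
Proof.
move=> le_T orbit j; exists j; have lt_j := ltn_ord j.
rewrite -[nat_of_ord j]add0n -(mul0n n) orbit //; last lia.
by rewrite /wlen ifN ?cwin1 //; lia.
Qed.

Lemma wielandt_singleton_exponent :
  3 <= n -> singleton_exponent (hsucc wielandt_rel) ((n - 1) ^ 2 + 1).
Proof.
move=> n_ge3; have n_gt0 : 0 < n by lia.
pose z := Ordinal n_gt0; pose T := (n - 2) * n + 2.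
have FW j a : a < n -> j * n + a < T -> hsucc wielandt_rel (cwin n a (wlen j a)) =
  hsucc wielandt_rel (cwin n a (wlen j a)) by [].
have orbit := wielandt_orbit (ltnW n_ge3) (erefl : nat_of_ord z = 0) FW.
have -> : (n - 1) ^ 2 + 1 = T by rewrite /T expnS expn1; nia.
apply: (singleton_exponent_orbit (z := z) (hsucc_homo _)).
- by rewrite /T addn2.
- by rewrite orbit ?cwin_setT // /wlen ?ifT //; nia.
- have -> : T.-1 = (n - 2) * n + 1 by rewrite /T addn2 addn1.
  by rewrite orbit ?cwin_neqT // /wlen ?ifN //; nia.
- by apply: (wielandt_orbit_set1 _ orbit); rewrite /T; nia.
Qed.

End Wielandt.

Section Path.

Variables n k : nat.

(* The path 0 -> 1 -> ... -> k - 1 whose vertices from k - 1 on point everywhere. *)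
Definition path_rel (h u w : 'I_n) := (u == w) && ((h == u + 1 :> nat) || (k <= u + 1)).

Lemma hsucc_path_set1 (j : 'I_n) :
  hsucc path_rel [set j] = if k <= j + 1 then setT else [set x : 'I_n | x == j + 1 :> nat].
Proof.
apply/setP => x; rewrite !inE; apply/existsP/idP.
  case=> u /existsP[w /and3P[/andP[/eqP <- e_xu]]]; rewrite inE => /eqP u_j _.
  by move: e_xu; rewrite u_j; case: ifP => // _; rewrite orbF inE.
move=> x_in; exists j; apply/existsP; exists j; rewrite !inE eqxx /= andbT /path_rel eqxx /=.
by move: x_in; case: ifP => _; rewrite ?orbT // inE => ->.
Qed.

Lemma path_singleton_exponent : 2 <= n -> 0 < k <= n -> singleton_exponent (hsucc path_rel) k.
Proof.
move=> n_ge2 /andP[k_gt0 le_kn].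
have lt_n1 : n.-1 < n by lia.
have FT : hsucc path_rel setT = setT.
  apply/eqP; rewrite eqEsubset subsetT /=.
  have := hsucc_homo path_rel (subsetT [set Ordinal lt_n1]).
  by rewrite hsucc_path_set1 /= ifT //; lia.
split=> //.
  suff full t (j : 'I_n) : k.-1 <= j + t -> iter t.+1 (hsucc path_rel) [set j] = setT.
    by move=> j; rewrite -(prednK k_gt0) full //; lia.
  elim: t j => [|t IH] j le_k.
    by rewrite /= hsucc_path_set1 ifT //; lia.
  rewrite iterSr hsucc_path_set1; case: ifP => [_|k_gt]; first exact: iter_fix.
  have lt_j1 : j + 1 < n by lia.
  have -> : [set x : 'I_n | x == j + 1 :> nat] = [set Ordinal lt_j1].
    by apply/setP => x; rewrite !inE.
  by apply: IH => /=; lia.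
have n_gt0 : 0 < n by lia.
exists (Ordinal n_gt0).
suff orbit t : t <= k.-1 -> exists2 j : 'I_n, nat_of_ord j = t &
    iter t (hsucc path_rel) [set Ordinal n_gt0] = [set j].
  have [j _ ->] := orbit k.-1 (leqnn _).
  by apply/negP => /eqP j_full; have := cards1 j; rewrite j_full cardsT card_ord; lia.
elim: t => [|t IH] le_t; first by exists (Ordinal n_gt0).
have [j j_t iter_t] := IH (ltnW le_t).
have lt_j1 : j + 1 < n by lia.
exists (Ordinal lt_j1); first by rewrite /= j_t addn1.
rewrite iterS iter_t hsucc_path_set1 ifN; last lia.
by apply/setP => x; rewrite !inE.
Qed.

End Path.

Section Trigger.

Variables (n u0 w0 : nat).

(* Wielandt plus the hyperedges [i <- (u0, w0)] for all i: the set is filled up at the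
   first step after it contains both u0 and w0. *)
Definition trigger_rel (h u w : 'I_n) :=
  wielandt_rel h u w || (u == u0 :> nat) && (w == w0 :> nat).

Lemma hsucc_trigger_off (S : {set 'I_n}) :
  (forall u w : 'I_n, u \in S -> w \in S -> nat_of_ord u = u0 -> nat_of_ord w = w0 -> False) ->
  hsucc trigger_rel S = hsucc (@wielandt_rel n) S.
Proof.
move=> off; apply/setP => x; rewrite !inE.
apply/existsP/existsP => -[u /existsP[w e_uw]]; exists u; apply/existsP; exists w; move: e_uw.
  case/and3P => /orP[e_xuw|/andP[/eqP u_0 /eqP w_0]] u_S w_S; first by rewrite e_xuw u_S w_S.
  by case: (off u w).
by rewrite /trigger_rel; case/and3P => -> -> ->.
Qed.

Lemma hsucc_trigger_on (S : {set 'I_n}) (u w : 'I_n) :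
  u \in S -> w \in S -> nat_of_ord u = u0 -> nat_of_ord w = w0 -> hsucc trigger_rel S = setT.
Proof.
move=> u_S w_S u_0 w_0; apply/setP => x; rewrite !inE; apply/existsP; exists u.
by apply/existsP; exists w; rewrite u_S w_S /trigger_rel u_0 w_0 !eqxx orbT.
Qed.

End Trigger.

Lemma trigger_singleton_exponent n k : 3 <= n -> n < k <= 2 * n - 2 ->
  singleton_exponent (hsucc (@trigger_rel n (k - n - 1) (k - n))) k.
Proof.
move=> n_ge3 /andP[lt_nk le_k].
have [n_gt0 k_gt0] : 0 < n /\ 0 < k by lia.
pose z := Ordinal n_gt0; set F := hsucc _.
have FW j a : a < n -> j * n + a < k.-1 ->
    F (cwin n a (wlen n j a)) = hsucc (@wielandt_rel n) (cwin n a (wlen n j a)).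
  move=> lt_a lt_t; apply: hsucc_trigger_off => u w; rewrite !inE /in_cwin /wlen.
  by case: j lt_t => [|[|j]] lt_t + + u_0 w_0; rewrite u_0 w_0; case_ifs; nia.
have orbit := wielandt_orbit (ltnW n_ge3) (erefl : nat_of_ord z = 0) FW.
have late : iter k.-1 F [set z] = cwin n (k - n - 1) 2.
  have -> : k.-1 = 1 * n + (k - n - 1) by lia.
  by rewrite orbit /wlen ?ifN //; lia.
have lt_u0 : k - n - 1 < n by lia.
have lt_w0 : k - n < n by lia.
have full : iter k F [set z] = setT.
  rewrite -[X in iter X _ _](prednK k_gt0) iterS late.
  apply: (hsucc_trigger_on (u := Ordinal lt_u0) (w := Ordinal lt_w0));
    by rewrite // inE /in_cwin /=; lia.
apply: (singleton_exponent_orbit (hsucc_homo _) k_gt0 full).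
  by rewrite late cwin_neqT //; lia.
by apply: (wielandt_orbit_set1 _ orbit); lia.
Qed.

(* Length of the window started at q with length l0, after s steps of growth from the pin:
   one more is gained when the window passes the chord. *)
Definition pin_len n q l0 s := if (q + l0 <= n) && (n < q + l0 + s) then l0 + s + 1 else l0 + s.

Section Pin.

Variables (n : nat) (q p : 'I_n).

(* Wielandt plus the single hyperedge [q <- (p, q)], which makes the window keep q. *)
Definition pin_rel (h u w : 'I_n) := wielandt_rel h u w || [&& h == q, u == p & w == q].

Lemma hsucc_pin_off (S : {set 'I_n}) :
  (p \in S -> q \in S -> q \in hsucc (@wielandt_rel n) S) ->
  hsucc pin_rel S = hsucc (@wielandt_rel n) S.
Proof.
move=> off; apply/setP => x; rewrite [in RHS]inE inE.
apply/existsP/existsP => -[u /existsP[w]]; last first.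
  move=> e_uw; exists u; apply/existsP; exists w.
  by move: e_uw; rewrite /pin_rel; case/and3P => -> -> ->.
case/and3P => /orP[e_xuw|/and3P[/eqP -> /eqP u_p /eqP w_q]] u_S w_S.
  by exists u; apply/existsP; exists w; rewrite e_xuw u_S w_S.
by move: off; rewrite -u_p -w_q => /(_ u_S w_S); rewrite inE => /existsP.
Qed.

Lemma hsucc_pin_on (S : {set 'I_n}) :
  p \in S -> q \in S -> hsucc pin_rel S = q |: hsucc (@wielandt_rel n) S.
Proof.
move=> p_S q_S; apply/setP => x; rewrite !inE; apply/existsP/orP.
  case=> u /existsP[w]; rewrite /pin_rel; case/and3P => /orP[e_xuw|/and3P[/eqP -> _ _]] u_S w_S.
    by right; apply/existsP; exists u; apply/existsP; exists w; rewrite e_xuw u_S w_S.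
  by left.
case=> [/eqP ->|/existsP[u /existsP[w /and3P[e_xuw u_S w_S]]]].
  by exists p; apply/existsP; exists q; rewrite /pin_rel !eqxx p_S q_S orbT.
by exists u; apply/existsP; exists w; rewrite /pin_rel e_xuw u_S w_S.
Qed.


Lemma pin_orbit J d (z : 'I_n) :
  3 <= n -> 0 < J -> nat_of_ord z = 0 -> d.+1 = wlen n J q -> d.+1 < n ->
  nat_of_ord p = (if q + d < n then q + d else q + d - n) ->
  (forall j a, a < n -> j * n + a <= J * n + q ->
     iter (j * n + a) (hsucc pin_rel) [set z] = cwin n a (wlen n j a)) /\
  (forall s, iter (J * n + q + s) (hsucc pin_rel) [set z] = cwin n q (pin_len n q d.+1 s)).
Proof.
move=> n_ge3 J_gt0 z0 d_len lt_d p_def; have lt_q := ltn_ord q.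
have FW j a : a < n -> j * n + a < J * n + q ->
    hsucc pin_rel (cwin n a (wlen n j a)) = hsucc (@wielandt_rel n) (cwin n a (wlen n j a)).
  move=> lt_a lt_t; apply: hsucc_pin_off => p_in q_in.
  rewrite hsucc_wielandt_cwin /wlen; [|lia|done|by case_ifs].
  have [a_q|a_neq] := eqVneq a q.
    have lt_jJ : j < J by rewrite -(ltn_pmul2r (ltnW (ltnW n_ge3))); lia.
    by move: p_in d_len; rewrite inE /in_cwin p_def a_q /wlen; case_ifs; lia.
  have : a != nat_of_ord q by [].
  by move: q_in; rewrite !inE /in_cwin /csucc /wlen; case_ifs; lia.
have orbit := wielandt_orbit (ltnW n_ge3) z0 FW; split=> // s.
elim: s => [|s IH].
  by rewrite addn0 orbit //; apply: cwin_eq; left; rewrite -d_len /pin_len; case_ifs; lia.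
rewrite addnS iterS IH hsucc_pin_on; first last.
- by rewrite inE /in_cwin /pin_len; case_ifs; lia.
- by rewrite inE /in_cwin /pin_len p_def; case_ifs; lia.
rewrite hsucc_wielandt_cwin; [|lia|done|by rewrite /pin_len; case_ifs; lia].
by rewrite setU1_cwin; apply: cwin_eq; left; rewrite /pin_len; case_ifs; lia.
Qed.

End Pin.

(* Divide k by n - 1: k = (J + 1)(n - 1) + r; pin at q = r + 1, or at q = 0 if r = 0. *)
Lemma pin_parameters n k : 3 <= n -> 2 * n - 1 <= k <= (n - 1) ^ 2 ->
  exists J q d s, [/\ 0 < J, q < n, d.+1 = wlen n J q, d.+1 < n &
    [/\ k = J * n + q + s, 0 < s, n <= pin_len n q d.+1 s & pin_len n q d.+1 s.-1 < n]].
Proof.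
case: n => [|m] //; rewrite subn1 /= => m_ge2 /andP[le_k k_le].
have [m_gt0 k_le'] : 0 < m /\ k <= m * m by rewrite expnS expn1 in k_le; lia.
move: (divn_eq k m) (ltn_pmod k m_gt0); move: (k %/ m) (k %% m) => D r k_eq lt_r.
have D_ge2 : 2 <= D by nia.
have D_le : D <= m by nia.
have D_r : D = m -> r = 0 by nia.
case: D D_ge2 D_le D_r k_eq => [|J] // J_gt0 J_le J_r k_eq.
have E1 : J.+1 * m = J * m + m by rewrite mulSn addnC.
have E2 : J * m.+1 = J * m + J by rewrite mulnS addnC.
rewrite E1 in k_eq; move: (J * m) E2 k_eq => Jm E2 k_eq.
have [r0|r_gt0] := posnP r.
  by exists J, 0, J, (m - J); rewrite /wlen /pin_len E2; repeat split; case_ifs; lia.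
exists J, r.+1, (wlen m.+1 J r.+1).-1, (m - J - 1).
by rewrite /wlen /pin_len E2; repeat split; case_ifs; lia.
Qed.

Lemma pin_singleton_exponent n k : 3 <= n -> 2 * n - 1 <= k <= (n - 1) ^ 2 ->
  exists e : 'I_n -> 'I_n -> 'I_n -> bool, singleton_exponent (hsucc e) k.
Proof.
move=> n_ge3 /(pin_parameters n_ge3) [J [q [d [s [J_gt0 lt_q d_len lt_d]]]]].
case=> -> s_gt0 full late.
have lt_p : (if q + d < n then q + d else q + d - n) < n by case_ifs; lia.
have n_gt0 : 0 < n by lia.
pose z := Ordinal n_gt0.
have [orbit pinned] :=
  pin_orbit (q := Ordinal lt_q) (p := Ordinal lt_p) n_ge3 J_gt0
    (erefl : nat_of_ord z = 0) d_len lt_d erefl.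
exists (pin_rel (Ordinal lt_q) (Ordinal lt_p)).
apply: (singleton_exponent_orbit (z := z) (hsucc_homo _)); first lia.
- by rewrite pinned cwin_setT.
- have -> : (J * n + q + s).-1 = J * n + q + s.-1 by lia.
  by rewrite pinned cwin_neqT.
- by apply: (wielandt_orbit_set1 _ orbit) => /=; nia.
Qed.

Lemma singleton_exponent_range n k : 2 <= n -> 0 < k <= (n - 1) ^ 2 + 1 ->
  exists e : 'I_n -> 'I_n -> 'I_n -> bool, singleton_exponent (hsucc e) k.
Proof.
move=> n_ge2 /andP[k_gt0 k_le].
have [le_kn|lt_nk] := leqP k n.
  by exists (path_rel k); apply: path_singleton_exponent => //; rewrite k_gt0.
have n_ge3 : 3 <= n.
  by case: n n_ge2 k_le lt_nk => [|[|[|n]]] //= _; rewrite ?subn1 /=; lia.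
have [le_k2|lt_k2] := leqP k (2 * n - 2).
  by exists (trigger_rel (k - n - 1) (k - n)); apply: trigger_singleton_exponent; rewrite ?lt_nk.
have [le_k3|lt_k3] := leqP k ((n - 1) ^ 2).
  by apply: pin_singleton_exponent; rewrite // le_k3 andbT; lia.
have -> : k = (n - 1) ^ 2 + 1 by lia.
by exists (@wielandt_rel n); apply: wielandt_singleton_exponent.
Qed.

Local Open Scope ring_scope.

Section TensorSupport.

Variables (R : realType) (m n : nat).
Implicit Types (A : tensor R m n) (x : 'I_n -> R) (S : {set 'I_n}).

Definition support_map A S : {set 'I_n} :=
  [set i | [exists f : {ffun 'I_m -> 'I_n},
     [&& [forall k : 'I_m, (val k == 0%N) ==> (f k == i)], A f != 0 &
         [forall k : 'I_m, (val k != 0%N) ==> (f k \in S)]]]].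

Definition supp x : {set 'I_n} := [set i | x i != 0].

Lemma support_map_homo A : {homo support_map A : S1 S2 / S1 \subset S2}.
Proof.
move=> S1 S2 S12; apply/subsetP => i; rewrite !inE.
case/existsP => f /and3P[f_i A_f /forallP f_S]; apply/existsP; exists f.
rewrite f_i A_f /=; apply/forallP => k; apply/implyP => k_neq0.
exact/(subsetP S12)/(implyP (f_S k)).
Qed.

Lemma support_map_set0 A : (2 <= m)%N -> support_map A set0 = set0.
Proof.
move=> m_ge2; apply/setP => i; rewrite !inE; apply/negbTE/existsP.
by case=> f /and3P[_ _ /forallP /(_ (Ordinal m_ge2))]; rewrite inE.
Qed.

Lemma tapp_ge0 A x i : nonneg_tensor A -> (forall j, 0 <= x j) -> 0 <= tapp A x i.
Proof.
by move=> A_ge0 x_ge0; apply: sumr_ge0 => f _; rewrite mulr_ge0 ?prodr_ge0.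
Qed.

Lemma tapp_neq0 A x i : nonneg_tensor A -> (forall j, 0 <= x j) ->
  (tapp A x i != 0) = (i \in support_map A (supp x)).
Proof.
move=> A_ge0 x_ge0; rewrite /tapp inE psumr_neq0; last first.
  by move=> f _; rewrite mulr_ge0 ?prodr_ge0.
apply/hasP/existsP.
  case=> f _ /andP[f_i term_gt0]; exists f; move: (lt0r_neq0 term_gt0).
  rewrite mulf_eq0 negb_or f_i => /andP[-> /prodf_neq0 x_f] /=.
  by apply/forallP => k; apply/implyP => k_neq0; rewrite inE x_f.
case=> f /and3P[f_i A_f /forallP f_S]; exists f; first by rewrite mem_index_enum.
rewrite f_i lt0r mulf_eq0 negb_or A_f mulr_ge0 ?prodr_ge0 // andbT /=.
by apply/prodf_neq0 => k k_neq0; move/implyP: (f_S k) => /(_ k_neq0); rewrite inE.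
Qed.

Lemma supp_TA A x : (2 <= m)%N -> nonneg_tensor A -> (forall j, 0 <= x j) ->
  supp (TA A x) = support_map A (supp x).
Proof.
move=> m_ge2 A_ge0 x_ge0; apply/setP => i.
rewrite [in LHS]inE -(tapp_neq0 i A_ge0 x_ge0) /TA.
have expo_gt0 : 0 < ((m.-1)%:R : R)^-1 by rewrite invr_gt0 ltr0n; lia.
apply/idP/idP => [TA_neq0|tapp_neq0].
  have TA_gt0 : 0 < powR (tapp A x i) (m.-1%:R)^-1 by rewrite lt0r TA_neq0 powR_ge0.
  exact/lt0r_neq0/(gt0_powR expo_gt0 (tapp_ge0 i A_ge0 x_ge0) TA_gt0).
by apply/lt0r_neq0/powR_gt0; rewrite lt0r tapp_neq0 tapp_ge0.
Qed.

Lemma supp_iter_TA A x r : (2 <= m)%N -> nonneg_tensor A -> (forall j, 0 <= x j) ->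
  supp (iter r (TA A) x) = iter r (support_map A) (supp x).
Proof.
move=> m_ge2 A_ge0 x_ge0; elim: r => //= r <-.
by rewrite supp_TA //; case: r => [|r] j //=; apply: powR_ge0.
Qed.

Lemma prim_exponentE A r : (2 <= m)%N -> nonneg_tensor A ->
  prim_exponent A r <-> set_exponent (support_map A) r.
Proof.
move=> m_ge2 A_ge0; split=> -[r_gt0 full]; split=> //.
  move=> S S_neq0; pose x i : R := if i \in S then 1 else 0.
  have x_ge0 j : 0 <= x j by rewrite /x; case: ifP.
  have supp_x : supp x = S.
    by apply/setP => i; rewrite inE /x; case: ifP; rewrite ?oner_neq0 ?eqxx.
  rewrite -supp_x -supp_iter_TA //; apply/setP => i; rewrite !inE gt_eqF //.
  apply: full; split=> //; case/set0Pn: S_neq0 => j j_S.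
  by exists j; rewrite /x j_S oner_neq0.
move=> x [x_ge0 [j x_j]] i.
have /full : supp x != set0 by apply/set0Pn; exists j; rewrite inE.
rewrite -supp_iter_TA // => /setP /(_ i); rewrite !inE lt0r => ->.
by case: r r_gt0 {full} => // r _ /=; apply: powR_ge0.
Qed.

Definition hyper_tensor (e : 'I_n -> 'I_n -> 'I_n -> bool) : tensor R m n :=
  [ffun f => if [exists h, exists u, exists w, e h u w &&
    (f == [ffun k : 'I_m => if val k == 0%N then h else if val k == 1%N then u else w])]
  then 1 else 0].

Lemma support_map_hyper_tensor e : (3 <= m)%N -> support_map (hyper_tensor e) =1 hsucc e.
Proof.
move=> m_ge3 S; apply/setP => i; rewrite !inE.
have [m0 m1 m2] : [/\ (0 < m)%N, (1 < m)%N & (2 < m)%N] by split; lia.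
apply/existsP/existsP.
  case=> f /and3P[/forallP f_i]; rewrite ffunE.
  case: ifP => [|_]; last by rewrite eqxx.
  case/existsP => h /existsP[u /existsP[w /andP[e_huw /eqP f_eq]]] _.
  move=> /forallP f_S; exists u; apply/existsP; exists w.
  move: (f_i (Ordinal m0)) (f_S (Ordinal m1)) (f_S (Ordinal m2)); rewrite f_eq !ffunE /=.
  by move=> /eqP <- -> ->; rewrite e_huw.
case=> u /existsP[w /and3P[e_iuw u_S w_S]].
exists [ffun k : 'I_m => if val k == 0%N then i else if val k == 1%N then u else w].
rewrite ffunE ifT; last first.
  by apply/existsP; exists i; apply/existsP; exists u; apply/existsP; exists w; rewrite e_iuw /=.
rewrite oner_neq0 /=; apply/andP; split; apply/forallP => k; apply/implyP; rewrite ffunE.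
  by move=> ->.
by move=> /negbTE ->; case: ifP.
Qed.

Lemma hyper_tensor_primitive_degree e k : (3 <= m)%N -> singleton_exponent (hsucc e) k ->
  primitive (hyper_tensor e) /\ primitive_degree (hyper_tensor e) k.
Proof.
move=> m_ge3 [k_gt0 full [z z_late]]; set A := hyper_tensor e.
have A_ge0 : nonneg_tensor A by move=> f; rewrite ffunE; case: ifP.
have m_ge2 : (2 <= m)%N by lia.
have iterA t S : iter t (support_map A) S = iter t (hsucc e) S.
  by elim: t => //= t ->; apply: support_map_hyper_tensor.
have A_k : prim_exponent A k.
  apply/prim_exponentE => //; split=> // S /set0Pn[j j_S]; rewrite iterA.
  apply/eqP; rewrite eqEsubset subsetT /= -(full j).
  by apply: iter_subset; [exact: hsucc_homo | rewrite sub1set].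
split; first by split=> //; exists k.
split=> // r lt_rk /(prim_exponentE r m_ge2 A_ge0) [r_gt0 A_r].
have eT : hsucc e setT = setT := setT_fixed_of_iter (hsucc_homo e) k_gt0 (full z).
move: (A_r _ (set1_neq0 z)); rewrite iterA => z_r.
by move/negP: z_late; apply; apply/eqP; apply: (iter_setT_le eT z_r); lia.
Qed.

End TensorSupport.

Theorem theorem3p4 (R : realType) (m n : nat) :
  (3 <= m)%N -> (2 <= n)%N ->
  forall k : nat,
    (exists A : tensor R m n, primitive A /\ primitive_degree A k) <->
    (1 <= k <= (n - 1) ^ 2 + 1)%N.
Proof.
move=> m_ge3 n_ge2 k; have m_ge2 : (2 <= m)%N by lia.
split=> [[A [[A_ge0 [r A_r]] [A_k A_min]]]|/(singleton_exponent_range n_ge2) [e e_k]].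
  have /(prim_exponentE r m_ge2 A_ge0) A_r' := A_r.
  have card_gt1 : (1 < #|'I_n|)%N by rewrite card_ord.
  have := set_exponent_wielandt_bound card_gt1 (support_map_homo A) (support_map_set0 A m_ge2) A_r'.
  rewrite card_ord => bound.
  rewrite (proj1 A_k) leqNgt; apply/negP => /A_min; apply.
  exact/(prim_exponentE _ m_ge2 A_ge0).
by exists (hyper_tensor R m e); apply: hyper_tensor_primitive_degree.
Qed.
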